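(* Let $d\ge2$, $\varepsilon\in(0,1)$, $c\in\{1,2,\dots\}\cup\{\infty\}$, and let $W$ be the gap process of the $d$-ball SBBS. Fix $j\in\{1,\dots,d-1\}$ and let $x\in\mathbb Z^{d-1}_{\ge0}$ with $x_j=0$, $x_{j+1}\ge2$ (if $j+1\le d-1$) and $x_i\ge1$ for all $i\notin\{j,j+1\}$. Then $R_j:=\mathbb E[W_1-W_0\mid W_0=x]\in\mathbb R^{d-1}$ is given, with coordinates outside $\{1,\dots,d-1\}$ omitted and all unlisted coordinates equal to $0$, by: - if $c=1$: $(R_j)_j=\varepsilon(1-\varepsilon)$, $(R_j)_{j+1}=-\varepsilon(1-\varepsilon)$; - if $c\ge2$: $(R_j)_{j-1}=(1-\varepsilon)^2$, $(R_j)_j=\varepsilon(1-\varepsilon)$, $(R_j)_{j+1}=-(1-\varepsilon)$. In particular the $(d-1)\times(d-1)$ matrix $[R_1,\dots,R_{d-1}]$ equals $(1-\varepsilon)\hat R^{\varepsilon,c}$.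
   Context: Stochastic box-ball system (SBBS). Fix an error probability $\varepsilon\in[0,1]$ and a capacity $c\in\{1,2,\dots\}\cup\{\infty\}$. A configuration is $\zeta\in\{0,1\}^{\mathbb N}$, $\mathbb N=\{1,2,\dots\}$, with finitely many $1$'s (balls). Given $\zeta$, the stochastic carrier process $\Gamma$ is defined by $\Gamma(0)=0$ and recursively (with fresh independent randomness at each $k$): $\Gamma(k)=\Gamma(k-1)+1$ with probability $1-\varepsilon$ (and $\Gamma(k)=\Gamma(k-1)$ otherwise) if $\zeta(k)=1$ and $\Gamma(k-1)<c$; $\Gamma(k)=\Gamma(k-1)-1$ if $\zeta(k)=0$ and $\Gamma(k-1)\ge1$; $\Gamma(k)=\Gamma(k-1)$ otherwise. The new configuration is $\zeta'(k)=\mathbf 1(\Gamma(k)-\Gamma(k-1)=-1)+\mathbf 1(\Gamma(k)=\Gamma(k-1),\ \zeta(k)=1)$. Iterating independently gives the SBBS trajectory. With $d$ balls at positions $\zeta^{(1)}_t<\dots<\zeta^{(d)}_t$, the gap process is $W_t=(W^1_t,\dots,W^{d-1}_t)$, $W^i_t=\zeta^{(i+1)}_t-\zeta^{(i)}_t-1$, a time-homogeneous Markov chain on $\mathbb Z^{d-1}_{\ge0}$. $\mathrm{tridiag}_r(a,b,c)$ is the $r\times r$ tridiagonal matrix with diagonal $b$, subdiagonal $a$, superdiagonal $c$; $R_{\mathrm{PT}}=\mathrm{tridiag}_{d-1}(-1,1,0)$; $\hat R^{\varepsilon,c}=\varepsilon R_{\mathrm{PT}}$ if $c=1$ and $\hat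 R^{\varepsilon,c}=\mathrm{tridiag}_{d-1}(-1,\varepsilon,1-\varepsilon)$ if $c\ge2$. *)

From HB Require Import structures.
From mathcomp Require Import all_boot all_order all_algebra.
Set Implicit Arguments. Unset Strict Implicit. Unset Printing Implicit Defensive.
Import Order.TTheory GRing.Theory Num.Theory.
Local Open Scope ring_scope.

Inductive cap := CapFin of nat | CapInf.

Definition is_cap1 (c : cap) : bool :=
  match c with CapFin 1 => true | _ => false end.

Definition below_cap (c : cap) (g : nat) : bool :=
  match c with CapFin n => (g < n)%N | CapInf => true end.

(* Stochastic carrier process, given the configuration zeta : nat -> bool
   (sites 1,2,...) and the outcome of the fresh Bernoulli(1-eps) coin at
   each site k (coin k = true means "pick up", probability 1-eps). *)
Fixpoint sbbs_gamma (c : cap) (zeta coin : nat -> bool) (k : nat) : nat :=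
  (if k is k'.+1 then
    let g := sbbs_gamma c zeta coin k' in
    if zeta k && below_cap c g then (if coin k then g.+1 else g)
    else if ~~ zeta k && (0 < g) then g.-1
    else g
  else 0)%N.

Definition sbbs_next (c : cap) (zeta coin : nat -> bool) (k : nat) : bool :=
  let G := sbbs_gamma c zeta coin in
  (((G k).+1 == G k.-1) || ((G k == G k.-1) && zeta k))%N.

(* p : nat -> nat lists (0-based) the positions of the d balls of z, increasingly. *)
Definition balls_at (z : nat -> bool) (d : nat) (p : nat -> nat) : Prop :=
  [/\ forall i, (i.+1 < d)%N -> (p i < p i.+1)%N,
      (1 <= p 0)%N &
      forall k, (1 <= k)%N -> z k = [exists i : 'I_d, p i == k]].

(* i-th gap (1 <= i <= d-1): W^i = zeta^{(i+1)} - zeta^{(i)} - 1,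
   paper's ball i+1 being our 0-based ball i. *)
Definition gap (p : nat -> nat) (i : nat) : nat := (p i - p i.-1 - 1)%N.

(* Initial positions: first ball at a >= 1, gaps x_1, ..., x_{d-1}. *)
Definition init_pos (a : nat) (x : nat -> nat) (i : nat) : nat :=
  (a + i + \sum_(1 <= m < i.+1) x m)%N.

Definition config_of (d : nat) (p : nat -> nat) (k : nat) : bool :=
  [exists i : 'I_d, p i == k].

(* One coin per ball (ball i at position p i); coins at empty sites are never used. *)
Definition coin_of (d : nat) (p : nat -> nat) (w : {ffun 'I_d -> bool}) (k : nat) : bool :=
  [forall i : 'I_d, (p i == k) ==> w i].

Definition coin_prob (R : nzRingType) (d : nat) (eps : R) (w : {ffun 'I_d -> bool}) : R :=
  \prod_(i < d) (if w i then 1 - eps else eps).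

Definition tridiag (R : nzRingType) (r : nat) (a b c : R) : 'M[R]_r :=
  \matrix_(i < r, j < r)
    (if i == j then b
     else if (i : nat) == j.+1 then a
     else if (j : nat) == i.+1 then c else 0).

Definition R_PT (R : nzRingType) (d : nat) : 'M[R]_(d.-1) := tridiag d.-1 (-1) 1 0.

Definition Rhat (R : nzRingType) (d : nat) (eps : R) (c : cap) : 'M[R]_(d.-1) :=
  if is_cap1 c then eps *: R_PT R d else tridiag d.-1 (-1) eps (1 - eps).

Definition drift_formula (R : nzRingType) (eps : R) (c : cap) (j i : nat) : R :=
  if is_cap1 c then
    (if i == j then eps * (1 - eps)
     else if i == j.+1 then - (eps * (1 - eps)) else 0)
  else
    (if ((1 <= i) && (i == j.-1))%N then (1 - eps) ^+ 2
     else if i == j then eps * (1 - eps)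
     else if i == j.+1 then - (1 - eps) else 0).


(* Entry (i,j) of an r x r matrix with 1-based indices (0 outside the range). *)
Definition entry1 (R : nzRingType) (r : nat) (M : 'M[R]_r) (i j : nat) : R :=
  match @insub _ (fun k => k < r)%N _ i.-1, @insub _ (fun k => k < r)%N _ j.-1 with
  | Some i', Some j' => M i' j'
  | _, _ => 0
  end.

From HB Require Import structures.
From mathcomp Require Import all_boot all_order all_algebra.
From mathcomp Require Import zify ring lra.
Import Order.TTheory GRing.Theory Num.Theory.
Set Implicit Arguments. Unset Strict Implicit. Unset Printing Implicit Defensive.

(* Since x_j = 0 while every other gap is at least 1 (at least 2 behind ball j),
   the carrier meets the balls one at a time, except for the adjacent pair j-1, j:
   an isolated ball is picked up with probability 1 - eps and dropped on the next
   site, while the pair leaves at most min(c, 2) balls in the carrier, which land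
   in the gap behind ball j.  So ball i moves by an explicit Boolean function D_i of
   the coins of balls i, j-1 and j, gap i changes by D_i - D_{i-1}, and the drift
   follows from E[coin] = 1 - eps and E[coin * coin'] = (1 - eps)^2. *)

Section InitialPositions.
Variables (a : nat) (x : nat -> nat).
Local Notation p := (init_pos a x).

Lemma init_posS i : p i.+1 = (p i + x i.+1).+1.
Proof. by rewrite /init_pos big_nat_recr //=; lia. Qed.

Lemma init_pos_pred i : 0 < i -> p i = (p i.-1 + x i).+1.
Proof. by case: i => // i _; rewrite init_posS. Qed.

Lemma init_pos_homo : {homo p : m n / m < n}.
Proof. by apply: homo_ltn => [???|i]; [exact: ltn_trans | rewrite init_posS; lia]. Qed.

Lemma leq_init_pos : {mono p : m n / m <= n}.
Proof. exact: leq_mono init_pos_homo. Qed.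

Lemma ltn_init_pos : {mono p : m n / m < n}.
Proof. exact: leqW_mono leq_init_pos. Qed.

Lemma eqn_init_pos m n : (p m == p n) = (m == n).
Proof. by rewrite !eqn_leq !leq_init_pos. Qed.

Variable d : nat.

Definition in_segment i k := (p i <= k) && ((i.+1 < d) ==> (k < p i.+1)).

Lemma config_of_segment i k : i < d -> in_segment i k ->
  config_of d p k = (k == p i).
Proof.
move=> id /andP [pik kp].
apply/existsP/idP => [[o /eqP ko]|/eqP ->]; last by exists (Ordinal id).
move: pik kp; rewrite -ko eqn_init_pos; case: (ltngtP o i) => // io.
  by rewrite leq_init_pos leqNgt io.
have id1 : i.+1 < d by apply: leq_ltn_trans (ltn_ord o).
by rewrite id1 ltn_init_pos ltnNge io.
Qed.

Lemma config_of_before k : k < p 0 -> config_of d p k = false.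
Proof.
by move=> kp; apply/existsP => [[o /eqP ko]]; move: kp; rewrite -ko ltn_init_pos.
Qed.

Lemma segment_exists k : 0 < d -> p 0 <= k -> exists2 i, i < d & in_segment i k.
Proof.
move=> d0 pk.
have ex : exists i, (i < d) && (p i <= k) by exists 0; rewrite d0.
have ub i : (i < d) && (p i <= k) -> i <= d by case/andP => /ltnW.
case: (ex_maxnP ex ub) => i /andP [id pik] imax.
exists i => //; rewrite /in_segment pik; apply/implyP => id1.
by rewrite ltnNge; apply/negP => pk1; have := imax i.+1; rewrite id1 pk1 ltnn => /(_ isT).
Qed.

Lemma in_segment_pred i k : in_segment i k.+1 -> p i < k.+1 -> in_segment i k.
Proof.
case/andP=> _ kp pik; rewrite /in_segment -ltnS pik /=.
by apply/implyP => id1; apply: ltnW; apply: (implyP kp).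
Qed.

Lemma in_segment_last_site i : i.+1 < d ->
  in_segment i (p i.+1).-1 /\ (p i.+1).-1 - p i = x i.+1.
Proof. by rewrite /in_segment init_posS; split; [apply/andP; split; lia | lia]. Qed.

End InitialPositions.

Definition ball_coin d (w : {ffun 'I_d -> bool}) (i : nat) : bool :=
  [exists o : 'I_d, (val o == i) && w o].

Lemma ball_coinE d (w : {ffun 'I_d -> bool}) (o : 'I_d) : ball_coin w o = w o.
Proof.
by apply/existsP/idP => [[o' /andP [/eqP/val_inj -> //]]|wo]; exists o; rewrite eqxx.
Qed.

Lemma coin_of_ball a x d (w : {ffun 'I_d -> bool}) i : i < d ->
  coin_of (init_pos a x) w (init_pos a x i) = ball_coin w i.
Proof.
move=> id; apply/forallP/existsP => [wp|[o /andP [/eqP oi wo]] o'].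
  by exists (Ordinal id); rewrite eqxx /=; have := wp (Ordinal id); rewrite eqxx.
by rewrite eqn_init_pos -oi; apply/implyP => /eqP/val_inj ->.
Qed.

Definition carried (c : cap) (j d : nat) (w : {ffun 'I_d -> bool}) (i : nat) : nat :=
  if i == j then
    (if is_cap1 c then nat_of_bool (ball_coin w j.-1 || ball_coin w j)
     else ball_coin w j.-1 + ball_coin w j)
  else ball_coin w i.

Lemma carried_le2 (c : cap) (j d : nat) (w : {ffun 'I_d -> bool}) i : carried c j w i <= 2.
Proof.
by rewrite /carried; case: (i == j) (is_cap1 c) (ball_coin w i)
  (ball_coin w j) (ball_coin w j.-1) => [] [] [] [] [].
Qed.

Section Carrier.
Variables (c : cap) (d j : nat) (x : nat -> nat) (a : nat).
Hypotheses (c_pos : c <> CapFin 0) (a_pos : 1 <= a) (j_range : 1 <= j <= d.-1)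
  (xj0 : x j = 0) (xj1_ge2 : j.+1 <= d.-1 -> 2 <= x j.+1)
  (x_pos : forall i, 1 <= i <= d.-1 -> i <> j -> i <> j.+1 -> 1 <= x i).
Variable w : {ffun 'I_d -> bool}.
Local Notation p := (init_pos a x).
Local Notation in_segment := (in_segment a x d).
Local Notation carried := (carried c j w).
Local Notation G := (sbbs_gamma c (config_of d p) (coin_of p w)).

(* The only ball reached by a nonempty carrier is ball j, which directly follows ball j-1. *)
Definition arrival i : nat := (i == j) && ball_coin w j.-1.

Lemma carried_minus_gap i : 1 <= i <= d.-1 -> carried i.-1 - x i = arrival i.
Proof.
move=> i_range; rewrite /arrival; case: (eqVneq i j) => [->|ij].
  by rewrite xj0 subn0 /carried ifN //; lia.
have [ij1|ij1] := eqVneq i j.+1.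
  rewrite ij1 /=; apply/eqP/(leq_trans (carried_le2 _ _ _ _))/xj1_ge2; lia.
have x1 : 1 <= x i by apply: x_pos => //; apply/eqP.
rewrite /carried ifN; last lia.
by move: x1; case: (ball_coin _ _); lia.
Qed.

Lemma pickup_carried i :
  (if below_cap c (arrival i) then
     (if ball_coin w i then (arrival i).+1 else arrival i)
   else arrival i) = carried i.
Proof.
have bc0 : below_cap c 0 by case: c c_pos => [[|n]|].
have bc1 : below_cap c 1 = ~~ is_cap1 c by case: c c_pos => [[|[|n]]|].
rewrite /arrival /carried; case: eqVneq => [->|_] /=; last first.
  by rewrite bc0; case: (ball_coin w i).
by case: (ball_coin w j.-1) (ball_coin w j) => [] [];
  rewrite /= ?bc0 ?bc1; case: (is_cap1 c).
Qed.

Lemma sbbs_gammaS z co k : sbbs_gamma c z co k.+1 =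
  let g := sbbs_gamma c z co k in
  if z k.+1 && below_cap c g then (if co k.+1 then g.+1 else g)
  else if ~~ z k.+1 && (0 < g) then g.-1 else g.
Proof. by []. Qed.

Definition carrier_profile k (g : nat) :=
  (k < p 0 -> g = 0) /\
  (forall i, i < d -> in_segment i k -> g = carried i - (k - p i)).

Lemma carrier_profile_pred k g i : carrier_profile k.-1 g -> i < d -> in_segment i k ->
  g = if k == p i then arrival i else carried i - (k - p i).-1.
Proof.
case=> gbefore gseg id seg; have pik : p i <= k by case/andP: seg.
have p0_pos : 0 < p 0 by rewrite /init_pos; lia.
have p0i : p 0 <= p i by rewrite leq_init_pos.
case: eqVneq => [ball|inner].
  case: i id {seg pik p0i} ball => [|i] id ball.
    rewrite gbefore /arrival; last lia.
    by have -> : (0 == j) = false by lia.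
  have [segk gapk] := in_segment_last_site a x id.
  rewrite (gseg i); [|lia|by rewrite ball].
  by rewrite ball gapk -carried_minus_gap //; lia.
rewrite (gseg i id); last by apply: in_segment_pred; rewrite prednK //; lia.
by congr (_ - _); lia.
Qed.

Lemma sbbs_gamma_profile k : carrier_profile k (G k).
Proof.
have p0_pos : 0 < p 0 by rewrite /init_pos; lia.
elim: k => [|k IH].
  split=> // i id /andP [pik _].
  have : p 0 <= p i by rewrite leq_init_pos.
  lia.
split=> [kp|i id seg].
  by rewrite sbbs_gammaS /= (proj1 IH) ?config_of_before //; lia.
have Gk := @carrier_profile_pred k.+1 _ i IH id seg.
rewrite sbbs_gammaS /= (config_of_segment id seg) Gk.
case: eqVneq => [ball|inner] /=.
  by rewrite ball coin_of_ball // subnn subn0 pickup_carried.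
rewrite subSn; last by case/andP: seg; rewrite leq_eqVlt eq_sym (negbTE inner).
by rewrite subnS; case: (_ - _).
Qed.

(* Balls are indistinguishable and are relabelled in increasing order: when the
   carrier picks up both j-1 and j (c >= 2) they land at p j + 1 and p j + 2. *)
Definition displacement i : nat :=
  if i == j.-1 then ball_coin w i + [&& ~~ is_cap1 c, ball_coin w i & ball_coin w j]
  else carried i.

Definition new_pos i := p i + displacement i.

Lemma displacement_le_gap i : 1 <= i <= d.-1 -> i != j -> displacement i.-1 <= x i.
Proof.
move=> i_range ij; rewrite /displacement ifN; last lia.
have [ij1|ij1] := eqVneq i.-1 j.
  apply: leq_trans (carried_le2 _ _ _ _) _.
  have -> : i = j.+1 by lia.
  apply: xj1_ge2; lia.
have x1 : 1 <= x i by apply: x_pos => //; [apply/eqP | lia].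
by rewrite /carried ifN //; apply: leq_trans (leq_b1 _) x1.
Qed.

Lemma displacement_pred_j : displacement j.-1 <= displacement j.
Proof.
rewrite /displacement eqxx ifN; last lia.
rewrite /carried eqxx.
by case: (ball_coin w j.-1) (ball_coin w j) (is_cap1 c) => [] [] [].
Qed.

Lemma new_pos_pred_lt i : 1 <= i <= d.-1 -> i != j -> new_pos i.-1 < p i.
Proof.
move=> i_range ij; have i_pos : 0 < i by lia.
by have := displacement_le_gap i_range ij; rewrite /new_pos (init_pos_pred a x i_pos); lia.
Qed.

Lemma new_pos_ltS i : i.+1 < d -> new_pos i < new_pos i.+1.
Proof.
move=> id1; have [ij1|ij1] := eqVneq i.+1 j.
  have xi1 : x i.+1 = 0 by rewrite ij1.
  have := displacement_pred_j; rewrite -ij1 /= /new_pos init_posS xi1; lia.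
have i1_range : 1 <= i.+1 <= d.-1 by lia.
exact: leq_trans (new_pos_pred_lt i1_range ij1) (leq_addr _ _).
Qed.

Lemma gap_new_pos i : 1 <= i <= d.-1 ->
  gap new_pos i + displacement i.-1 = x i + displacement i.
Proof.
move=> i_range; have i_pos : 0 < i by lia.
have := @new_pos_ltS i.-1; rewrite prednK //.
by rewrite /gap /new_pos (init_pos_pred a x i_pos); lia.
Qed.

Lemma leq_new_pos m n : m <= n -> n < d -> new_pos m <= new_pos n.
Proof.
elim: n => [|n IH]; first by rewrite leqn0 => /eqP ->.
rewrite leq_eqVlt ltnS => /orP [/eqP -> //|mn nd].
exact: leq_trans (IH mn (ltnW nd)) (ltnW (new_pos_ltS nd)).
Qed.

Lemma new_pos_lt_init_pos o i : o < i -> i < d -> ~~ ((o == j.-1) && (i == j)) ->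
  new_pos o < p i.
Proof.
move=> oi id; have [ij|ij _] := eqVneq i j.
  subst i => oj.
  have pj : p j.-1 < p j by rewrite ltn_init_pos; lia.
  have j1 : 1 <= j.-1 <= d.-1 by lia.
  have jj : j.-1 != j by lia.
  by have := new_pos_pred_lt j1 jj; have := @leq_new_pos o j.-1.-1; lia.
have i1 : 1 <= i <= d.-1 by lia.
by have := new_pos_pred_lt i1 ij; have := @leq_new_pos o i.-1; lia.
Qed.

Lemma init_pos_j : p j = (p j.-1).+1.
Proof.
have j_pos : 0 < j by case/andP: j_range.
by rewrite (init_pos_pred a x j_pos) xj0 addn0.
Qed.

Lemma new_config_segment i k : i < d -> in_segment i k ->
  [exists o : 'I_d, new_pos o == k] =
  (displacement i == k - p i) || ((i == j) && (displacement j.-1 == (k - p i).+1)).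
Proof.
move=> id /andP [pik kp].
apply/existsP/orP => [[o /eqP ko]|].
  case: (ltngtP o i) => [oi|io|oi].
  - have [/andP [/eqP oj /eqP ij]|nji] := boolP ((o == j.-1 :> nat) && (i == j)).
      by right; rewrite ij eqxx /=; move: ko pik; rewrite /new_pos oj ij init_pos_j; lia.
    by have := new_pos_lt_init_pos oi id nji; lia.
  - have id1 : i.+1 < d by apply: leq_ltn_trans (ltn_ord o).
    have : p i.+1 <= p o by rewrite leq_init_pos.
    by move: ko (implyP kp id1); rewrite /new_pos; lia.
  - by left; move: ko; rewrite /new_pos oi; lia.
case=> [/eqP disp|/andP [/eqP ij /eqP disp]].
  by exists (Ordinal id); rewrite /new_pos /= disp subnKC.
have jd : j.-1 < d by lia.
by exists (Ordinal jd); rewrite /new_pos /= disp; move: pik; rewrite ij init_pos_j; lia.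
Qed.

(* The update rule of sbbs_next at the site r steps after ball i, with the carrier
   values given by carrier_profile. *)
Lemma drop_rule i r : (i == j.-1 -> r = 0) ->
  let g := carried i - r in
  let g' := if r == 0 then arrival i else carried i - r.-1 in
  (g.+1 == g') || ((g == g') && (r == 0)) =
  (displacement i == r) || ((i == j) && (displacement j.-1 == r.+1)).
Proof.
have jj : (j == j.-1) = false by lia.
rewrite /arrival /displacement /carried => r0.
have [->|ij] := eqVneq i j; rewrite ?jj ?eqxx /=.
  by case: r {r0} => [|[|[|r]]];
    case: (is_cap1 c) (ball_coin w j.-1) (ball_coin w j) => [] [] [].
have [ij1|ij1] := eqVneq i j.-1; last by case: r {r0} => [|[|r]]; case: (ball_coin w i).
by rewrite r0 // ij1; case: (is_cap1 c) (ball_coin w j.-1) (ball_coin w j) => [] [] [].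
Qed.

Lemma sbbs_next_new_pos k : 1 <= k ->
  sbbs_next c (config_of d p) (coin_of p w) k = [exists o : 'I_d, new_pos o == k].
Proof.
move=> k_pos; rewrite /sbbs_next.
case: (ltnP k (p 0)) => [kp|pk].
  rewrite (proj1 (sbbs_gamma_profile k)) // (proj1 (sbbs_gamma_profile k.-1)); last lia.
  rewrite config_of_before //=; apply/esym/existsP => [[o /eqP ko]].
  have : p 0 <= p o by rewrite leq_init_pos.
  by move: kp; rewrite -ko /new_pos; lia.
have d_pos : 0 < d by lia.
have [i id seg] := segment_exists d_pos pk.
rewrite (proj2 (sbbs_gamma_profile k) i id seg) (config_of_segment id seg).
rewrite (carrier_profile_pred (sbbs_gamma_profile k.-1) id seg).
rewrite (new_config_segment id seg) -(drop_rule (r := k - p i)) /=.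
  by have -> : (k == p i) = (k - p i == 0) by case/andP: seg; lia.
move=> /eqP ij; have ij1 : i.+1 = j by lia.
by case/andP: seg => _ /implyP; rewrite init_posS ij1 xj0; lia.
Qed.

End Carrier.

Local Open Scope ring_scope.

Definition coin_expect (R : nzRingType) d (eps : R) (f : {ffun 'I_d -> bool} -> R) : R :=
  \sum_w coin_prob eps w * f w.

Section CoinExpectation.
Variables (R : comNzRingType) (d : nat) (eps : R).
Local Notation E := (@coin_expect R d eps).

Lemma eq_coin_expect f g : (forall w, f w = g w) -> E f = E g.
Proof. by move=> fg; apply: eq_bigr => w _; rewrite fg. Qed.

Lemma coin_expectD f g : E (fun w => f w + g w) = E f + E g.
Proof. by rewrite -big_split; apply: eq_bigr => w _; rewrite mulrDr. Qed.

Lemma coin_expectB f g : E (fun w => f w - g w) = E f - E g.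
Proof. by rewrite -sumrB; apply: eq_bigr => w _; rewrite mulrBr. Qed.

Lemma coin_expect_prod (S : pred 'I_d) :
  E (fun w => \prod_(i | S i) (w i)%:R) = \prod_(i | S i) (1 - eps).
Proof.
rewrite /coin_expect (eq_bigr (fun w : {ffun 'I_d -> bool} => \prod_i
   ((if w i then 1 - eps else eps) * (if S i then (w i)%:R else 1)))); last first.
  by move=> w _; rewrite big_split /= -big_mkcond.
rewrite -(bigA_distr_bigA (fun i b =>
  (if b then 1 - eps else eps) * (if S i then (b : bool)%:R else 1))) /=.
rewrite [RHS]big_mkcond; apply: eq_bigr => i _; rewrite big_bool /=.
by case: (S i); rewrite ?mulr1 ?mulr0 ?addr0 // subrK.
Qed.

Lemma coin_expect_ball k : (k < d)%N -> E (fun w => (ball_coin w k)%:R) = 1 - eps.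
Proof.
move=> kd; have := coin_expect_prod (pred1 (Ordinal kd)); rewrite big_pred1_eq => <-.
by apply: eq_bigr => w _; rewrite big_pred1_eq -(ball_coinE w (Ordinal kd)).
Qed.

Lemma coin_expect_ball2 k l : (k < d)%N -> (l < d)%N -> k != l ->
  E (fun w => (ball_coin w k && ball_coin w l)%:R) = (1 - eps) ^+ 2.
Proof.
move=> kd ld kl; set o := Ordinal kd; set o' := Ordinal ld.
have prod2 (F : 'I_d -> R) : \prod_(i | (i == o) || (i == o')) F i = F o * F o'.
  rewrite (bigD1 o) ?eqxx //= (bigD1 o') /=; last by rewrite eqxx orbT eq_sym.
  by rewrite big1 ?mulr1 // => i /andP [/andP [/orP [] /eqP -> ]]; rewrite ?eqxx.
rewrite expr2 -(prod2 (fun _ => 1 - eps)).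
rewrite -(coin_expect_prod [pred i | (i == o) || (i == o')]); apply: eq_bigr => w _.
rewrite prod2 (ball_coinE w o : ball_coin w k = w o) (ball_coinE w o' : ball_coin w l = w o').
by case: (w o); case: (w o'); rewrite /= ?mul1r ?mul0r.
Qed.

End CoinExpectation.

Definition mean_displacement (R : nzRingType) (eps : R) c j k : R :=
  if k == j.-1 then (1 - eps) + (~~ is_cap1 c)%:R * (1 - eps) ^+ 2
  else if k == j then
    (if is_cap1 c then (1 - eps) *+ 2 - (1 - eps) ^+ 2 else (1 - eps) *+ 2)
  else 1 - eps.

Lemma coin_expect_displacement (R : comNzRingType) d (eps : R) c j k :
  (1 <= j < d)%N -> (k < d)%N ->
  coin_expect eps (fun w : {ffun 'I_d -> bool} => (displacement c j w k)%:R) =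
  mean_displacement eps c j k.
Proof.
move=> j_range kd; have jd : (j < d)%N by lia.
have j1d : (j.-1 < d)%N by lia.
have jj : j.-1 != j by lia.
rewrite /displacement /mean_displacement /carried.
have [->|kj1] := eqVneq k j.-1.
  rewrite (eq_coin_expect _ (fun w => natrD _ _ _)) coin_expectD coin_expect_ball //.
  case: (is_cap1 c) => /=; last by rewrite mul1r coin_expect_ball2.
  by rewrite mul0r addr0 /coin_expect big1 ?addr0 // => w _; rewrite mulr0.
have [kj|kj] := eqVneq k j; last exact: coin_expect_ball.
subst k.
case: (is_cap1 c); last first.
  by rewrite (eq_coin_expect _ (fun w => natrD _ _ _)) coin_expectD !coin_expect_ball.
have orE (b b' : bool) : ((b || b')%:R : R) = b%:R + b'%:R - (b && b')%:R.
  by case: b; case: b' => /=; ring.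
rewrite (eq_coin_expect _ (fun w => orE _ _)) coin_expectB coin_expectD.
by rewrite !coin_expect_ball // coin_expect_ball2.
Qed.

Ltac decide_nat_tests := repeat match goal with |- context [if ?b then _ else _] =>
  first [ rewrite (_ : b = true); [| lia] | rewrite (_ : b = false); [| lia] ] end.

Lemma mean_displacement_drift (R : comNzRingType) (eps : R) c j i :
  (1 <= i)%N -> (1 <= j)%N ->
  mean_displacement eps c j i - mean_displacement eps c j i.-1 = drift_formula eps c j i.
Proof.
move=> i_pos j_pos; rewrite /mean_displacement /drift_formula.
case: (is_cap1 c) => /=; (have [ij|ij] := eqVneq i j; [|have [ij1|ij1] := eqVneq i j.+1;
  [|have [ij2|ij2] := eqVneq i j.-1]]); decide_nat_tests; ring.
Qed.

Lemma entry1E (R : nzRingType) r (M : 'M[R]_r) i j (ir : (i.-1 < r)%N) (jr : (j.-1 < r)%N) :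
  entry1 M i j = M (Ordinal ir) (Ordinal jr).
Proof.
rewrite /entry1; case: insubP => [i' _ ei|]; last by rewrite ir.
case: insubP => [j' _ ej|]; last by rewrite jr.
by congr (M _ _); apply: val_inj.
Qed.

Lemma Rhat_column (R : comNzRingType) d (eps : R) c i j :
  (1 <= i <= d.-1)%N -> (1 <= j <= d.-1)%N ->
  (1 - eps) * entry1 (Rhat d eps c) i j = drift_formula eps c j i.
Proof.
move=> i_range j_range; have ir : (i.-1 < d.-1)%N by lia.
have jr : (j.-1 < d.-1)%N by lia.
rewrite (entry1E _ ir jr) /Rhat /R_PT /tridiag /drift_formula.
case: (is_cap1 c); rewrite ?mxE /= (_ : (Ordinal ir == Ordinal jr) = (i.-1 == j.-1)) //;
  (have [ij|ij] := eqVneq i j; [|have [ij1|ij1] := eqVneq i j.+1;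
  [|have [ij2|ij2] := eqVneq i j.-1]]); decide_nat_tests; ring.
Qed.

Theorem proposition6p3 (R : realFieldType) (d : nat) (eps : R) (c : cap)
  (j : nat) (x : nat -> nat) (a : nat) :
  (2 <= d)%N -> 0 < eps < 1 -> c <> CapFin 0 ->
  (1 <= j <= d.-1)%N ->
  x j = 0%N ->
  ((j.+1 <= d.-1)%N -> (2 <= x j.+1)%N) ->
  (forall i, (1 <= i <= d.-1)%N -> i <> j -> i <> j.+1 -> (1 <= x i)%N) ->
  (1 <= a)%N ->
  let p0 := init_pos a x in
  let zeta0 := config_of d p0 in
  exists p1 : {ffun 'I_d -> bool} -> nat -> nat,
    (forall w, balls_at (sbbs_next c zeta0 (coin_of p0 w)) d (p1 w)) /\
    forall i, (1 <= i <= d.-1)%N ->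
      let drift := \sum_(w : {ffun 'I_d -> bool})
                     coin_prob eps w * ((gap (p1 w) i)%:R - (x i)%:R) in
      drift = drift_formula eps c j i /\
      drift = (1 - eps) * entry1 (Rhat d eps c) i j.
Proof.
move=> _ _ c_pos j_range xj0 xj1_ge2 x_pos a_pos p0 zeta0.
exists (new_pos c j x a); split=> [w|i i_range drift].
  split=> [i||k k_pos].
  - exact: new_pos_ltS.
  - by rewrite /new_pos /init_pos; lia.
  - exact: sbbs_next_new_pos.
suff -> : drift = drift_formula eps c j i by rewrite Rhat_column.
have gapE (w : {ffun 'I_d -> bool}) : (gap (new_pos c j x a w) i)%:R - (x i)%:R =
    (displacement c j w i)%:R - (displacement c j w i.-1)%:R :> R.
  apply/eqP; rewrite subr_eq addrAC eq_sym subr_eq -!natrD.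
  by rewrite gap_new_pos // addnC.
have j_d : (1 <= j < d)%N by lia.
rewrite -mean_displacement_drift; [|lia|lia].
rewrite -!(@coin_expect_displacement _ d) //; [|lia|lia].
by rewrite -coin_expectB; apply: eq_coin_expect.
Qed.
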